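(* Let $(A,E)$ be the direct producted $W^*$-probability space over $D_N$ of $W^*$-probability spaces $(A_1,\varphi_1),\dots,(A_N,\varphi_N)$, and let $a_j\in A_j$ for $j=1,\dots,N$. Then $x=(a_1,\dots,a_N)$ is $D_N$-semicircular in $(A,E)$ if and only if all nonzero $a_j$ are semicircular in $(A_j,\varphi_j)$, $j=1,\dots,N$.
   Context: Each $A_j$ is a von Neumann algebra and $\varphi_j$ a state on $A_j$ with $\varphi_j(a^* )=\overline{\varphi_j(a)}$. $A=\times_{j=1}^N A_j$ with componentwise operations and adjoint; $D_N=\mathbb{C}^N$ with componentwise operations, identified with the central subalgebra $\{(\alpha_1 1,\dots,\alpha_N 1)\}$ of $A$; $E((a_1,\dots,a_N))=(\varphi_1(a_1),\dots,\varphi_N(a_N))$. $D_N$-valued cumulants: $k_n(y_1,\dots,y_n)=\sum_{\sigma\in NC(n)}\prod_{V\in\sigma}E(\prod_{l\in V}y_l)\,\mu(\sigma,1_n)$; scalar cumulants $k_n^{(j)}$ analogously with $\varphi_j$. $x\in A$ is $D_N$-semicircular if it is self-adjoint and the only nonvanishing trivial $D_N$-valued cumulant $k_n(x,\dots,x)$ is the second one ($n=2$). $a\in A_j$ is semicircular if it is self-adjoint and the only nonvanishing cumulant $k^{(j)}_n(a,\dots,a)$ is the second one. *)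

From HB Require Import structures.
From mathcomp Require Import all_boot all_order all_algebra.
From mathcomp Require Import all_reals.
From mathcomp Require Import complex.
Set Implicit Arguments. Unset Strict Implicit. Unset Printing Implicit Defensive.
Import Order.TTheory GRing.Theory Num.Theory.
Local Open Scope ring_scope.

Record starAlg (C : numClosedFieldType) := StarAlg {
  sa_car :> algType C;
  sa_star : sa_car -> sa_car;
  sa_starK : involutive sa_star;
  sa_starD : forall x y, sa_star (x + y) = sa_star x + sa_star y;
  sa_starZ : forall (c : C) x, sa_star (c *: x) = c^* *: sa_star x;
  sa_starM : forall x y, sa_star (x * y) = sa_star y * sa_star x
}.
Arguments sa_star {C} A x : rename.

Definition is_state (C : numClosedFieldType) (A : starAlg C) (phi : A -> C) :=
  [/\ forall (c : C) (x y : A), phi (c *: x + y) = c * phi x + phi y,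
      phi 1 = 1,
      forall a : A, 0 <= phi (sa_star A a * a)
    & forall a : A, phi (sa_star A a) = (phi a)^*].

Definition crossing n (V W : {set 'I_n}) : bool :=
  [exists a : 'I_n, exists b : 'I_n, exists c : 'I_n, exists d : 'I_n,
     [&& (a < b)%N, (b < c)%N, (c < d)%N, a \in V, c \in V, b \in W & d \in W]].

Definition is_NC n (P : {set {set 'I_n}}) : bool :=
  partition P [set: 'I_n] &&
  [forall V in P, forall W in P, (V != W) ==> ~~ crossing V W].

Definition NCP n := {P : {set {set 'I_n}} | is_NC P}.

Definition refines n (s t : NCP n) : bool :=
  [forall V in val s, exists W in val t, V \subset W].

Definition zetaNC (C : numClosedFieldType) n : 'M[C]_#|{: NCP n}| :=
  \matrix_(i, j) (refines (enum_val i) (enum_val j))%:R.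

Definition mobiusNC (C : numClosedFieldType) n (s t : NCP n) : C :=
  invmx (zetaNC C n) (enum_rank s) (enum_rank t).

Lemma is_NC_top n : is_NC [set [set: 'I_n.+1]].
Proof.
apply/andP; split.
  apply/and3P; split.
  - by rewrite /cover big_set1.
  - apply/trivIsetP => A B; rewrite !inE => /eqP -> /eqP ->; by rewrite eqxx.
  - rewrite inE eq_sym; apply/negP => /eqP/setP/(_ ord0); by rewrite !inE.
apply/forallP => V; apply/implyP; rewrite inE => /eqP ->.
apply/forallP => W; apply/implyP; rewrite inE => /eqP ->.
by rewrite eqxx.
Qed.

Definition oneNC n : NCP n.+1 := exist (fun P => is_NC P) _ (is_NC_top n).

(* scalar-valued free cumulant k_{n+1}(y_0,...,y_n) w.r.t. phi *)
Definition cumulant (C : numClosedFieldType) (A : starAlg C) (phi : A -> C)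
    n (y : 'I_n.+1 -> A) : C :=
  \sum_(s : NCP n.+1)
    (\prod_(V in val s) phi (\prod_(l < n.+1 | l \in V) y l))
      * mobiusNC C s (oneNC n).

Definition semicircular (C : numClosedFieldType) (A : starAlg C) (phi : A -> C)
    (a : A) : Prop :=
  sa_star A a = a /\ forall n : nat, n != 1%N -> @cumulant C A phi n (fun _ => a) = 0.

Section Product.
Variables (C : numClosedFieldType) (N : nat) (A : 'I_N -> starAlg C)
          (phi : forall j, A j -> C).

Definition prodA := forall j, A j.

Definition prod_block n (y : 'I_n -> prodA) (V : {set 'I_n}) : prodA :=
  fun j => \prod_(l < n | l \in V) y l j.

Definition prod_star (x : prodA) : prodA := fun j => sa_star (A j) (x j).

Definition DN := {ffun 'I_N -> C}.

Definition condE (x : prodA) : DN := [ffun j => phi (x j)].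

Definition DN_cumulant n (y : 'I_n.+1 -> prodA) : DN :=
  \sum_(s : NCP n.+1)
    [ffun=> mobiusNC C s (oneNC n)] * \prod_(V in val s) condE (prod_block y V).

Definition DN_semicircular (x : prodA) : Prop :=
  prod_star x = x /\ forall n : nat, n != 1%N -> @DN_cumulant n (fun _ => x) = 0.
End Product.

From HB Require Import structures.
From mathcomp Require Import all_boot all_order all_algebra.
From mathcomp Require Import all_reals.
From mathcomp Require Import complex.
Import Order.TTheory GRing.Theory Num.Theory.
Local Open Scope ring_scope.

(* Expectation, products and adjoint in the direct product all act
   coordinatewise, so the j-th coordinate of a D_N-valued cumulant is the
   phi_j-cumulant of the j-th coordinates: x is D_N-semicircular exactly when
   every coordinate is semicircular.  A zero coordinate is harmless, since
   every block of a partition is nonempty and so all cumulants of 0 vanish. *)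

Lemma sa_star0 (C : numClosedFieldType) (B : starAlg C) : sa_star B 0 = 0.
Proof. by have := sa_starZ (0 : C) (0 : B); rewrite !scale0r conjC0 scale0r. Qed.

Lemma state0 (C : numClosedFieldType) (B : starAlg C) (phi : B -> C) :
  is_state phi -> phi 0 = 0.
Proof.
case=> phi_lin _ _ _; have := phi_lin 1 0 0; rewrite scaler0 addr0 mul1r.
by move=> phi0_double; apply: (@addrI _ (phi 0)); rewrite addr0 -phi0_double.
Qed.

Lemma cumulant0 (C : numClosedFieldType) (B : starAlg C) (phi : B -> C) n :
  phi 0 = 0 -> @cumulant C B phi n (fun _ => 0) = 0.
Proof.
move=> phi0; apply: big1 => -[P P_NC] _ /=.
have /andP[/and3P[/eqP coverP _ P_no0] _] := P_NC.
have [V VP _] : exists2 V, V \in P & ord0 \in V.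
  by apply/bigcupP; rewrite -/(cover P) coverP inE.
have V_gt0 : (0 < #|V|)%N by rewrite card_gt0; apply: contraNneq P_no0 => <-.
by rewrite (bigD1 V) //= prodr_const expr0n eqn0Ngt V_gt0 phi0 !mul0r.
Qed.

Lemma semicircular0 (C : numClosedFieldType) (B : starAlg C) (phi : B -> C) :
  phi 0 = 0 -> semicircular phi 0.
Proof. by move=> phi0; split=> [|n _]; [exact: sa_star0 | exact: cumulant0]. Qed.

Section Product.
Variables (C : numClosedFieldType) (N : nat) (A : 'I_N -> starAlg C)
          (phi : forall j, A j -> C).

Lemma DN_cumulantE n (y : 'I_n.+1 -> prodA A) j :
  DN_cumulant phi y j = cumulant (phi j) (fun l => y l j).
Proof.
rewrite sum_ffunE; apply: eq_bigr => s _.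
rewrite ffunE ffunE mulrC; congr (_ * _).
rewrite (big_morph (fun f : DN C N => f j) (id1 := 1) (op1 := *%R)) => [|f g|];
  rewrite ?ffunE //.
by apply: eq_bigr => V _; rewrite ffunE.
Qed.

Lemma DN_semicircularP (x : prodA A) :
  DN_semicircular phi x <-> forall j, semicircular (phi j) (x j).
Proof.
split=> [[x_sa x_cum] j | x_sc].
  split=> [|n n_neq1]; first by have := congr1 (fun y => y j) x_sa.
  have := congr1 (fun c : DN C N => c j) (x_cum n n_neq1).
  by rewrite DN_cumulantE ffunE.
split=> [|n n_neq1].
  by apply: boolp.functional_extensionality_dep => j; case: (x_sc j).
by apply/ffunP => j; rewrite DN_cumulantE ffunE; case: (x_sc j) => _ ->.
Qed.

End Product.

Theorem mainTheorem14 (R : realType) (N : nat) (A : 'I_N -> starAlg R[i])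
    (phi : forall j : 'I_N, A j -> R[i])
    (Hphi : forall j : 'I_N, is_state (phi j))
    (a : forall j : 'I_N, A j) :
  DN_semicircular phi a <->
  (forall j : 'I_N, a j != 0 -> semicircular (phi j) (a j)).
Proof.
split=> [/DN_semicircularP a_sc j _ | a_sc]; first exact: a_sc.
apply/DN_semicircularP => j.
have [->|a_neq0] := eqVneq (a j) 0; last exact: a_sc.
exact/semicircular0/state0.
Qed.
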